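(* Let $d=2$, $n\ge 2$, $\varepsilon=1/256$, and let $f$ be a stable update function. There exists $K>0$ (depending on $n$ and $f$) such that for every configuration $\mathcal U^{(0)}$ of $n$ opinions in $\mathbb S^1$ which is $\varepsilon$-inactive but active, there exists a sequence of at most $K$ interventions after which the resulting configuration is strictly convex.
   Context: Opinions are unit vectors in $\mathbb R^d$; a configuration is an $n$-tuple $(\vec u_1,\dots,\vec u_n)$ and $A_{ij}=\langle\vec u_i,\vec u_j\rangle$. An intervention $(i,j)$, $i\ne j$, replaces $\vec u_i$ by $\vec w/\|\vec w\|$ with $\vec w=\vec u_i+f(A_{ij})\vec u_j$, leaving others unchanged. $f:[-1,1]\to\mathbb R$ is stable if continuous and $\operatorname{sign}f(A)=\operatorname{sign}A$ for all $A$. For $0\le\varepsilon<1$, a configuration is $\varepsilon$-active if there exist $i,j$ with $\varepsilon<|A_{ij}|<1-\varepsilon$, and $\varepsilon$-inactive otherwise; ''active'' means $0$-active. Strictly convex: there exist $b_1,\dots,b_n\in\{\pm1\}$ with $\langle b_i\vec u_i,b_j\vec u_j\rangle>0$ for all $i,j$. *)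

From Stdlib Require Import Reals Lra List.
Open Scope R_scope.

Definition vec : Type := (R * R)%type.
Definition ip (u v : vec) : R := fst u * fst v + snd u * snd v.
Definition vnorm (u : vec) : R := sqrt (ip u u).
Definition vadd (u v : vec) : vec := (fst u + fst v, snd u + snd v).
Definition vscale (a : R) (u : vec) : vec := (a * fst u, a * snd u).

(* A configuration of n opinions: indices 0..n-1 (values at k >= n are irrelevant). *)
Definition config := nat -> vec.

Definition is_config (n : nat) (U : config) : Prop :=
  forall i, (i < n)%nat -> ip (U i) (U i) = 1.

Definition stable (f : R -> R) : Prop :=
  (forall A, -1 <= A <= 1 -> forall eps, 0 < eps -> exists delta, 0 < delta /\
     forall B, -1 <= B <= 1 -> Rabs (B - A) < delta -> Rabs (f B - f A) < eps) /\
  (forall A, -1 <= A <= 1 ->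
     (0 < A -> 0 < f A) /\ (A < 0 -> f A < 0) /\ (A = 0 -> f A = 0)).

Definition interv_w (f : R -> R) (U : config) (i j : nat) : vec :=
  vadd (U i) (vscale (f (ip (U i) (U j))) (U j)).

Definition intervene (f : R -> R) (U : config) (i j : nat) : config :=
  fun k => if Nat.eqb k i then vscale (/ vnorm (interv_w f U i j)) (interv_w f U i j)
           else U k.

(* A sequence of interventions applied in list order, each one legal:
   i <> j, both indices in range, and w <> 0 (so normalization is defined). *)
Fixpoint valid_seq (f : R -> R) (n : nat) (U : config) (s : list (nat * nat)) : Prop :=
  match s with
  | nil => True
  | (i, j) :: s' => (i < n)%nat /\ (j < n)%nat /\ i <> j /\
                    interv_w f U i j <> (0, 0) /\
                    valid_seq f n (intervene f U i j) s'
  end.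

Fixpoint apply_seq (f : R -> R) (U : config) (s : list (nat * nat)) : config :=
  match s with
  | nil => U
  | (i, j) :: s' => apply_seq f (intervene f U i j) s'
  end.

Definition eps_active (n : nat) (eps : R) (U : config) : Prop :=
  exists i j, (i < n)%nat /\ (j < n)%nat /\
    eps < Rabs (ip (U i) (U j)) < 1 - eps.

Definition eps_inactive (n : nat) (eps : R) (U : config) : Prop :=
  ~ eps_active n eps U.

Definition active (n : nat) (U : config) : Prop := eps_active n 0 U.

Definition strictly_convex (n : nat) (U : config) : Prop :=
  exists b : nat -> R, (forall i, (i < n)%nat -> b i = 1 \/ b i = -1) /\
    forall i j, (i < n)%nat -> (j < n)%nat ->
      ip (vscale (b i) (U i)) (vscale (b j) (U j)) > 0.

(* Inactivity splits the opinions into a cluster X nearly parallel and a cluster Y nearly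
   orthogonal to [U 0]. If Y is empty the configuration is already strictly convex. Otherwise
   choose [p] in X and [q] in Y maximizing [M = |<U p, U q>|]; activity forces [M > 0].
   Stability and compactness give [m > 0] with [m <= A f(A)] for [1/2 <= |A| <= 1], so each
   intervention [(i, p)] (i in X) or [(i, q)] (i in Y) divides [det(U i, anchor)^2] by at
   least [1 + m] while keeping [U i] close to its anchor. After [k] rounds with
   [(1 + m)^k >= 256] every opinion is within [M/8] of the line of its anchor, and orienting
   each opinion towards [U p] or [+-U q] makes all pairwise inner products positive. *)

From Stdlib Require Import Reals Lra Lia List Psatz FunctionalExtensionality.
Open Scope R_scope.

Definition clamp (a x : R) : R := Rmax a (Rmin x 1).

Lemma clamp_bounds a x : a <= 1 -> a <= clamp a x <= 1.
Proof. intros; unfold clamp, Rmax, Rmin; repeat destruct Rle_dec; lra. Qed.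

Lemma clamp_id a x : a <= x <= 1 -> clamp a x = x.
Proof. intros; unfold clamp, Rmax, Rmin; repeat destruct Rle_dec; lra. Qed.

Lemma clamp_lipschitz a x y : Rabs (clamp a x - clamp a y) <= Rabs (x - y).
Proof. unfold clamp, Rmax, Rmin; repeat destruct Rle_dec; split_Rabs; lra. Qed.

(* Clamping extends [A |-> |f (s A)|] from [[a, 1]] to a function continuous on all of [R],
   as [continuity_ab_min] requires. *)
Lemma stable_continuity_clamped f a s : stable f -> 0 <= a <= 1 -> (s = 1 \/ s = -1) ->
  forall c, continuity_pt (fun x => Rabs (f (s * clamp a x))) c.
Proof.
  intros [Hcont _] Ha Hs c.
  unfold continuity_pt, continue_in, limit1_in, limit_in; simpl; unfold R_dist.
  intros eps Heps.
  assert (Hin : forall x, -1 <= s * clamp a x <= 1)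
    by (intro x; pose proof (clamp_bounds a x); destruct Hs; subst; lra).
  destruct (Hcont _ (Hin c) eps Heps) as [d [Hd Hclose]].
  exists d; split; [lra|].
  intros x [_ Hx].
  assert (Hl : Rabs (s * clamp a x - s * clamp a c) < d).
  { pose proof (clamp_lipschitz a x c).
    replace (s * clamp a x - s * clamp a c) with (s * (clamp a x - clamp a c)) by ring.
    rewrite Rabs_mult. destruct Hs; subst; split_Rabs; lra. }
  eapply Rle_lt_trans; [apply Rabs_triang_inv2 | exact (Hclose _ (Hin x) Hl)].
Qed.

Lemma stable_abs_lower_bound f a : stable f -> 0 < a <= 1 ->
  exists m, 0 < m /\ forall A, a <= Rabs A <= 1 -> m <= Rabs (f A).
Proof.
  intros Hf Ha.
  assert (Hsign : forall x, a <= x <= 1 -> 0 < f x /\ f (- x) < 0).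
  { intros x Hx. destruct Hf as [_ Hs].
    split; [apply (Hs x) | apply (Hs (- x))]; lra. }
  destruct (continuity_ab_min (fun x => Rabs (f (1 * clamp a x))) a 1 ltac:(lra)
     (fun c _ => stable_continuity_clamped f a 1 Hf ltac:(lra) (or_introl eq_refl) c))
    as [xp [Hxp Hxp_in]].
  destruct (continuity_ab_min (fun x => Rabs (f (-1 * clamp a x))) a 1 ltac:(lra)
     (fun c _ => stable_continuity_clamped f a (-1) Hf ltac:(lra) (or_intror eq_refl) c))
    as [xn [Hxn Hxn_in]].
  cbv beta in Hxp, Hxn.
  rewrite clamp_id in Hxp, Hxn by lra.
  rewrite Rmult_1_l in Hxp. replace (-1 * xn) with (- xn) in Hxn by ring.
  exists (Rmin (Rabs (f xp)) (Rabs (f (- xn)))). split.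
  - destruct (Hsign xp Hxp_in) as [Hp _]. destruct (Hsign xn Hxn_in) as [_ Hn].
    apply Rmin_glb_lt; apply Rabs_pos_lt; lra.
  - intros A HA. destruct (Rle_or_lt 0 A) as [HA0 | HA0].
    + rewrite Rabs_pos_eq in HA by lra.
      specialize (Hxp A HA). rewrite clamp_id, Rmult_1_l in Hxp by lra.
      eapply Rle_trans; [apply Rmin_l | exact Hxp].
    + rewrite Rabs_left in HA by lra.
      specialize (Hxn (- A) HA). rewrite clamp_id in Hxn by lra.
      replace (-1 * - A) with A in Hxn by ring.
      eapply Rle_trans; [apply Rmin_r | exact Hxn].
Qed.

Lemma stable_push_lower_bound f a : stable f -> 0 < a <= 1 ->
  exists m, 0 < m /\ forall A, a <= Rabs A <= 1 -> m <= A * f A.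
Proof.
  intros Hf Ha.
  destruct (stable_abs_lower_bound f a Hf Ha) as [m [Hm0 Hm]].
  exists (a * m); split; [nra|].
  intros A HA. specialize (Hm A HA).
  destruct (proj2 Hf A ltac:(split_Rabs; lra)) as [Hpos [Hneg _]].
  destruct (Rle_or_lt 0 A) as [HA0 | HA0].
  - assert (0 < A) by (split_Rabs; lra).
    specialize (Hpos H). rewrite Rabs_pos_eq in HA, Hm by lra. nra.
  - specialize (Hneg HA0). rewrite Rabs_left in HA, Hm by lra. nra.
Qed.

Definition det (u v : vec) : R := fst u * snd v - snd u * fst v.

Lemma ip_sym u v : ip u v = ip v u.
Proof. unfold ip; ring. Qed.

Lemma det_antisym u v : det u v = - det v u.
Proof. unfold det; ring. Qed.

Lemma det_self u : det u u = 0.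
Proof. unfold det; ring. Qed.

Lemma ip_scale_l r u v : ip (vscale r u) v = r * ip u v.
Proof. unfold ip, vscale; simpl; ring. Qed.

Lemma ip_scale_r r u v : ip u (vscale r v) = r * ip u v.
Proof. unfold ip, vscale; simpl; ring. Qed.

Lemma det_scale_l r u v : det (vscale r u) v = r * det u v.
Proof. unfold det, vscale; simpl; ring. Qed.

Lemma det_scale_r r u v : det u (vscale r v) = r * det u v.
Proof. unfold det, vscale; simpl; ring. Qed.

Lemma ip_sq_add_det_sq u v : ip u u = 1 -> ip v v = 1 -> (ip u v)^2 + (det u v)^2 = 1.
Proof.
  destruct u as [u1 u2], v as [v1 v2]; unfold ip, det; simpl; intros Hu Hv.
  transitivity ((u1*u1 + u2*u2) * (v1*v1 + v2*v2)); [ring | rewrite Hu, Hv; ring].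
Qed.

Lemma Rabs_le_of_sq_le x B : x^2 <= B^2 -> 0 <= B -> Rabs x <= B.
Proof. intros; split_Rabs; nra. Qed.

Lemma ip_abs_le1 u v : ip u u = 1 -> ip v v = 1 -> Rabs (ip u v) <= 1.
Proof.
  intros Hu Hv; pose proof (ip_sq_add_det_sq u v Hu Hv).
  apply Rabs_le_of_sq_le; nra.
Qed.

Lemma det_abs_le1 u v : ip u u = 1 -> ip v v = 1 -> Rabs (det u v) <= 1.
Proof.
  intros Hu Hv; pose proof (ip_sq_add_det_sq u v Hu Hv).
  apply Rabs_le_of_sq_le; nra.
Qed.

Lemma ip_abs_ge_of_det_small u v : ip u u = 1 -> ip v v = 1 ->
  Rabs (det u v) <= 1/4 -> 1/2 <= Rabs (ip u v).
Proof.
  intros Hu Hv Hd. pose proof (ip_sq_add_det_sq u v Hu Hv).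
  assert ((det u v)^2 <= 1/16) by (split_Rabs; nra).
  split_Rabs; nra.
Qed.

Lemma det_neq0_of_ip_abs_lt1 u v : ip u u = 1 -> ip v v = 1 ->
  Rabs (ip u v) < 1 -> 0 < Rabs (det u v).
Proof.
  intros Hu Hv H. pose proof (ip_sq_add_det_sq u v Hu Hv).
  apply Rabs_pos_lt. intro E. rewrite E in *. split_Rabs; nra.
Qed.

Lemma det_le_ip_add_ip w x y : ip w w = 1 -> ip x x = 1 -> ip y y = 1 ->
  Rabs (det x y) <= Rabs (ip x w) + Rabs (ip y w).
Proof.
  intros Hw Hx Hy.
  assert (E : det x y = ip x w * det w y - ip y w * det w x).
  { destruct w as [w1 w2], x as [x1 x2], y as [y1 y2]; unfold ip, det in *; simpl in *.
    replace (x1 * y2 - x2 * y1) with ((x1 * y2 - x2 * y1) * (w1*w1 + w2*w2)) by (rewrite Hw; ring).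
    ring. }
  rewrite E. pose proof (det_abs_le1 w y Hw Hy). pose proof (det_abs_le1 w x Hw Hx).
  eapply Rle_trans; [apply Rabs_triang|]. rewrite Rabs_Ropp, !Rabs_mult.
  pose proof (Rabs_pos (ip x w)); pose proof (Rabs_pos (ip y w)). nra.
Qed.

Lemma det_le_det_add_det w x y : ip w w = 1 -> ip x x = 1 -> ip y y = 1 ->
  Rabs (det x y) <= Rabs (det x w) + Rabs (det y w).
Proof.
  intros Hw Hx Hy.
  set (w' := (- snd w, fst w)).
  assert (Hw' : ip w' w' = 1) by (destruct w; unfold ip, w' in *; simpl in *; lra).
  pose proof (det_le_ip_add_ip w' x y Hw' Hx Hy) as H.
  replace (ip x w') with (- det x w) in H by (unfold ip, det, w'; simpl; ring).
  replace (ip y w') with (- det y w) in H by (unfold ip, det, w'; simpl; ring).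
  rewrite !Rabs_Ropp in H; exact H.
Qed.

Lemma ip_pos_of_near_axes a c x y g :
  ip a a = 1 -> ip c c = 1 -> ip x x = 1 -> ip y y = 1 ->
  0 < g <= ip a c -> 0 < ip x a -> 0 < ip y c ->
  Rabs (det x a) <= g / 8 -> Rabs (det y c) <= g / 8 -> 0 < ip x y.
Proof.
  intros Ha Hc Hx Hy Hg Pa Pc Dx Dy.
  assert (E : ip x y = ip x a * ip y c * ip a c - ip x a * det c y * det a c
                       + det a x * ip y c * det a c + det a x * det c y * ip a c).
  { destruct a as [a1 a2], c as [c1 c2], x as [x1 x2], y as [y1 y2];
      unfold ip, det in *; simpl in *.
    replace (x1 * y1 + x2 * y2) with ((x1 * y1 + x2 * y2) * (a1*a1 + a2*a2) * (c1*c1 + c2*c2))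
      by (rewrite Ha, Hc; ring). ring. }
  rewrite E, (det_antisym a x), (det_antisym c y).
  pose proof (ip_abs_le1 a c Ha Hc) as Hg1. pose proof (det_abs_le1 a c Ha Hc) as Hk.
  pose proof (ip_sq_add_det_sq x a Hx Ha) as E1. pose proof (ip_sq_add_det_sq y c Hy Hc) as E2.
  set (G := ip a c) in *. set (s := det x a) in *. set (t := det y c) in *.
  set (K := det a c) in *. set (al := ip x a) in *. set (be := ip y c) in *.
  assert (G <= 1) by (split_Rabs; lra).
  assert (Rabs s <= G / 8) by lra. assert (Rabs t <= G / 8) by lra.
  assert (s^2 <= 1/64) by (split_Rabs; nra).
  assert (t^2 <= 1/64) by (split_Rabs; nra).
  assert (al >= 9/10) by nra. assert (be >= 9/10) by nra.
  assert (al <= 1) by nra. assert (be <= 1) by nra.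
  pose proof (Rabs_pos s). pose proof (Rabs_pos t). pose proof (Rabs_pos K).
  assert (B1 : Rabs (al * - t * K) <= G/8).
  { rewrite !Rabs_mult, Rabs_Ropp, (Rabs_pos_eq al) by lra.
    assert (Rabs t * Rabs K <= G/8) by nra. nra. }
  assert (B2 : Rabs (- s * be * K) <= G/8).
  { rewrite !Rabs_mult, Rabs_Ropp, (Rabs_pos_eq be) by lra.
    assert (Rabs s * Rabs K <= G/8) by nra. nra. }
  assert (B3 : Rabs (- s * - t * G) <= G/64).
  { rewrite !Rabs_mult, !Rabs_Ropp, (Rabs_pos_eq G) by lra.
    assert (Rabs s * Rabs t <= 1/64) by nra. nra. }
  assert (al * be >= 81/100) by nra.
  assert (al * be * G >= 81/100 * G) by nra.
  split_Rabs; nra.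
Qed.

Definition sgn (x : R) : R := if Rlt_dec 0 x then 1 else -1.

Lemma sgn_mul_self x : sgn x * x = Rabs x.
Proof. unfold sgn; destruct Rlt_dec; split_Rabs; lra. Qed.

Lemma sgn_sq x : sgn x * sgn x = 1.
Proof. unfold sgn; destruct Rlt_dec; lra. Qed.

Lemma sgn_pm x : sgn x = 1 \/ sgn x = -1.
Proof. unfold sgn; destruct Rlt_dec; auto. Qed.

Lemma Rabs_sgn_mul x y : Rabs (sgn x * y) = Rabs y.
Proof. rewrite Rabs_mult; unfold sgn; destruct Rlt_dec; split_Rabs; lra. Qed.

(* The witness flips each opinion [V i] to the side of its axis [F i]. *)
Lemma strictly_convex_of_axes n (V F : config) g : 0 < g ->
  (forall i j, (i < n)%nat -> (j < n)%nat -> g <= ip (F i) (F j)) ->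
  (forall i, (i < n)%nat ->
     ip (V i) (V i) = 1 /\ ip (F i) (F i) = 1 /\ Rabs (det (V i) (F i)) <= g / 8) ->
  strictly_convex n V.
Proof.
  intros Hg HF HV.
  assert (Hax : forall i, (i < n)%nat ->
    ip (vscale (sgn (ip (V i) (F i))) (V i)) (vscale (sgn (ip (V i) (F i))) (V i)) = 1 /\
    ip (F i) (F i) = 1 /\
    0 < ip (vscale (sgn (ip (V i) (F i))) (V i)) (F i) /\
    Rabs (det (vscale (sgn (ip (V i) (F i))) (V i)) (F i)) <= g / 8).
  { intros i Hi. destruct (HV i Hi) as [HVi [HFi Hd]].
    assert (g <= 1) by (rewrite <- HFi; auto).
    pose proof (ip_abs_ge_of_det_small _ _ HVi HFi ltac:(lra)).
    rewrite !ip_scale_l, ip_scale_r, det_scale_l, HVi, <- Rmult_assoc, sgn_sq,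
      sgn_mul_self, Rabs_sgn_mul.
    repeat split; lra. }
  exists (fun i => sgn (ip (V i) (F i))). split.
  - intros i _; apply sgn_pm.
  - intros i j Hi Hj.
    destruct (Hax i Hi) as [Xi [Fi [Pi Di]]]. destruct (Hax j Hj) as [Xj [Fj [Pj Dj]]].
    apply Rlt_gt, (ip_pos_of_near_axes (F i) (F j) _ _ g); auto.
Qed.

Definition pull (f : R -> R) (a v : vec) : vec :=
  vscale (/ vnorm (vadd v (vscale (f (ip v a)) a))) (vadd v (vscale (f (ip v a)) a)).

Lemma ip_normalize w : 0 < ip w w -> ip (vscale (/ vnorm w) w) (vscale (/ vnorm w) w) = 1.
Proof.
  intros Hw. unfold vnorm. rewrite ip_scale_l, ip_scale_r, <- Rmult_assoc, <- Rinv_mult,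
    sqrt_sqrt by lra.
  field; lra.
Qed.

Lemma det_normalize_sq w a : 0 < ip w w ->
  (det (vscale (/ vnorm w) w) a)^2 * ip w w = (det w a)^2.
Proof.
  intros Hw. unfold vnorm. rewrite det_scale_l.
  replace ((/ sqrt (ip w w) * det w a)^2)
    with ((det w a)^2 / (sqrt (ip w w) * sqrt (ip w w))) by (field; apply sqrt_lt_R0 in Hw; lra).
  rewrite sqrt_sqrt by lra. field; lra.
Qed.

Section Pull.
Variables (f : R -> R) (m : R).
Hypothesis m_pos : 0 < m.
Hypothesis f_push : forall A, 1/2 <= Rabs A <= 1 -> m <= A * f A.

Lemma pull_step a v : ip a a = 1 -> ip v v = 1 -> 1/2 <= Rabs (ip v a) ->
  vadd v (vscale (f (ip v a)) a) <> (0, 0) /\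
  ip (pull f a v) (pull f a v) = 1 /\
  (det (pull f a v) a)^2 * (1 + m) <= (det v a)^2 /\
  1/2 <= Rabs (ip (pull f a v) a).
Proof.
  intros Ha Hv HA. unfold pull.
  set (w := vadd v (vscale (f (ip v a)) a)).
  assert (Hww : ip w w = 1 + 2 * (ip v a * f (ip v a)) + (f (ip v a))^2).
  { unfold w. destruct v as [v1 v2], a as [a1 a2]; unfold ip, vadd, vscale in *; simpl in *.
    set (c := f (v1 * a1 + v2 * a2)).
    transitivity ((v1*v1 + v2*v2) + 2 * ((v1 * a1 + v2 * a2) * c) + c^2 * (a1*a1 + a2*a2));
      [ring | rewrite Hv, Ha; ring]. }
  assert (Hgrow : 1 + m <= ip w w).
  { pose proof (f_push (ip v a) (conj HA (ip_abs_le1 v a Hv Ha))).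
    pose proof (pow2_ge_0 (f (ip v a))). lra. }
  (* Adding a multiple of [a] keeps [det _ a] while the squared norm is at least [1 + m]. *)
  assert (Hdet : det w a = det v a) by (unfold w, det, vadd, vscale; simpl; ring).
  pose proof (ip_normalize w ltac:(lra)) as Hu.
  pose proof (det_normalize_sq w a ltac:(lra)) as Hd. rewrite Hdet in Hd.
  set (u := vscale (/ vnorm w) w) in *.
  assert (Hshrink : (det u a)^2 * (1 + m) <= (det v a)^2)
    by (pose proof (pow2_ge_0 (det u a)); nra).
  repeat split; auto.
  - intro E. rewrite E in Hgrow. unfold ip in Hgrow; simpl in Hgrow. lra.
  - pose proof (ip_sq_add_det_sq _ _ Hu Ha). pose proof (ip_sq_add_det_sq _ _ Hv Ha).
    assert ((ip v a)^2 >= 1/4) by (split_Rabs; nra).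
    pose proof (pow2_ge_0 (det u a)).
    split_Rabs; nra.
Qed.

Lemma pull_iter a v k : ip a a = 1 -> ip v v = 1 -> 1/2 <= Rabs (ip v a) ->
  ip (Nat.iter k (pull f a) v) (Nat.iter k (pull f a) v) = 1 /\
  1/2 <= Rabs (ip (Nat.iter k (pull f a) v) a) /\
  (det (Nat.iter k (pull f a) v) a)^2 * (1 + m)^k <= (det v a)^2.
Proof.
  intros Ha Hv HA. induction k as [|k [IH1 [IH2 IH3]]].
  - simpl. repeat split; auto. lra.
  - simpl Nat.iter.
    destruct (pull_step a _ Ha IH1 IH2) as [_ [P1 [P2 P3]]].
    repeat split; auto.
    simpl. pose proof (pow_lt (1 + m) k ltac:(lra)). nra.
Qed.

Lemma apply_seq_app U s1 s2 :
  apply_seq f U (s1 ++ s2) = apply_seq f (apply_seq f U s1) s2.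
Proof. revert U; induction s1 as [|[i j] s1 IH]; intros U; simpl; auto. Qed.

Lemma valid_seq_app n U s1 s2 : valid_seq f n U s1 ->
  valid_seq f n (apply_seq f U s1) s2 -> valid_seq f n U (s1 ++ s2).
Proof.
  revert U; induction s1 as [|[i j] s1 IH]; intros U H1 H2; simpl in *; auto.
  destruct H1 as [? [? [? [? ?]]]]. repeat split; auto.
Qed.

Lemma apply_seq_repeat U i j k : i <> j ->
  apply_seq f U (repeat (i, j) k) =
  fun x => if Nat.eqb x i then Nat.iter k (pull f (U j)) (U i) else U x.
Proof.
  revert U; induction k as [|k IH]; intros U Hij; apply functional_extensionality; intro x.
  - simpl. destruct (Nat.eqb_spec x i); subst; auto.
  - simpl. rewrite IH by auto. unfold intervene. rewrite Nat.eqb_refl.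
    destruct (Nat.eqb_spec j i); [congruence|].
    destruct (Nat.eqb_spec x i); auto.
    symmetry; exact (Nat.iter_succ_r k vec (pull f (U j)) (U i)).
Qed.

Lemma valid_seq_repeat n U i j k : (i < n)%nat -> (j < n)%nat -> i <> j ->
  ip (U i) (U i) = 1 -> ip (U j) (U j) = 1 -> 1/2 <= Rabs (ip (U i) (U j)) ->
  valid_seq f n U (repeat (i, j) k).
Proof.
  revert U; induction k as [|k IH]; intros U Hi Hj Hij Hui Huj HA; simpl; auto.
  destruct (pull_step (U j) (U i) Huj Hui HA) as [P0 [P1 [_ P3]]].
  repeat split; auto.
  apply IH; auto; unfold intervene; rewrite ?Nat.eqb_refl;
    destruct (Nat.eqb_spec j i); try congruence; auto.
Qed.

(* Anchors are kept outside [l], so they never move while [l] is processed. *)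
Definition pull_all (k : nat) (anchor : nat -> nat) (l : list nat) : list (nat * nat) :=
  flat_map (fun i => repeat (i, anchor i) k) l.

Lemma length_pull_all k anchor l : length (pull_all k anchor l) = (length l * k)%nat.
Proof.
  induction l as [|i l IH]; simpl; auto.
  rewrite length_app, repeat_length, IH. lia.
Qed.

Lemma apply_pull_all U k anchor l x : NoDup l -> (forall i, In i l -> ~ In (anchor i) l) ->
  apply_seq f U (pull_all k anchor l) x =
  if in_dec Nat.eq_dec x l then Nat.iter k (pull f (U (anchor x))) (U x) else U x.
Proof.
  revert U; induction l as [|i l IH]; intros U Hnd Hanc; [reflexivity|].
  inversion Hnd as [|? ? Hil Hnd']; subst.
  assert (Hai : anchor i <> i) by (intro E; apply (Hanc i); [left | rewrite E; left]; auto).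
  change (pull_all k anchor (i :: l)) with (repeat (i, anchor i) k ++ pull_all k anchor l).
  rewrite apply_seq_app, apply_seq_repeat by congruence.
  rewrite IH; auto.
  2: { intros j Hj Hin; apply (Hanc j); right; auto. }
  destruct (in_dec Nat.eq_dec x l) as [Hx | Hx];
    destruct (in_dec Nat.eq_dec x (i :: l)) as [Hx' | Hx'].
  - destruct (Nat.eqb_spec x i); [subst; contradiction|].
    destruct (Nat.eqb_spec (anchor x) i) as [E|]; auto.
    exfalso; apply (Hanc x); [right; auto | rewrite E; left; auto].
  - exfalso; apply Hx'; right; auto.
  - destruct (Nat.eqb_spec x i); [subst; auto|].
    destruct Hx' as [|]; [congruence | contradiction].
  - destruct (Nat.eqb_spec x i); [subst; exfalso; apply Hx'; left|]; auto.
Qed.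

Lemma valid_pull_all n U k anchor l : NoDup l ->
  (forall i, In i l ->
     ~ In (anchor i) l /\ (i < n)%nat /\ (anchor i < n)%nat /\
     ip (U i) (U i) = 1 /\ ip (U (anchor i)) (U (anchor i)) = 1 /\
     1/2 <= Rabs (ip (U i) (U (anchor i)))) ->
  valid_seq f n U (pull_all k anchor l).
Proof.
  revert U; induction l as [|i l IH]; intros U Hnd Hl; [exact I|].
  inversion Hnd as [|? ? Hil Hnd']; subst.
  destruct (Hl i (or_introl eq_refl)) as [Hai [Hi [Hani [Hui [Huai Hclose]]]]].
  assert (Hneq : i <> anchor i) by (intro E; apply Hai; rewrite <- E; left; auto).
  change (pull_all k anchor (i :: l)) with (repeat (i, anchor i) k ++ pull_all k anchor l).
  apply valid_seq_app; [apply valid_seq_repeat; auto|].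
  rewrite apply_seq_repeat by auto.
  apply IH; auto.
  intros j Hj. destruct (Hl j (or_intror Hj)) as [Haj [? [? [? [? ?]]]]].
  assert (j <> i) by (intro E; subst; contradiction).
  assert (anchor j <> i) by (intro E; apply Haj; rewrite E; left; auto).
  repeat match goal with |- context [Nat.eqb ?a ?b] => destruct (Nat.eqb_spec a b) end;
    try contradiction.
  repeat split; auto. intro; apply Haj; right; auto.
Qed.

End Pull.

Lemma exists_argmax_in_list {T} (g : T -> R) (l : list T) : l <> nil ->
  exists x, In x l /\ forall y, In y l -> g y <= g x.
Proof.
  induction l as [|a l IH]; intros Hne; [congruence|].
  destruct l as [|b l'].
  - exists a; split; [left; auto|]. intros y [<-|[]]; lra.
  - destruct (IH ltac:(discriminate)) as [x [Hx Hmax]].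
    destruct (Rle_lt_dec (g a) (g x)).
    + exists x; split; [right; auto|]. intros y [<-|Hy]; auto.
    + exists a; split; [left; auto|]. intros y [<-|Hy]; [lra|]. specialize (Hmax y Hy); lra.
Qed.

Lemma forall_or_exists_false (P : nat -> bool) n :
  (forall i, (i < n)%nat -> P i = true) \/ (exists i, (i < n)%nat /\ P i = false).
Proof.
  induction n as [|n [IH | IH]].
  - left; intros; lia.
  - destruct (P n) eqn:Hn.
    + left; intros i Hi. destruct (Nat.eq_dec i n); [subst; auto | apply IH; lia].
    + right; exists n; auto.
  - right. destruct IH as [i [Hi HP]]. exists i; split; auto; lia.
Qed.

(* By [1/256]-inactivity every opinion is nearly parallel or nearly orthogonal to [U 0];
   [near_u0] tells which. *)
Definition near_u0 (U : config) (i : nat) : bool :=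
  if Rlt_dec (1/2) (Rabs (ip (U i) (U 0%nat))) then true else false.

Section Configuration.
Variables (n : nat) (U : config).
Hypothesis n_pos : (0 < n)%nat.
Hypothesis U_unit : is_config n U.
Hypothesis U_inactive : eps_inactive n (1/256) U.

Lemma U0_unit : ip (U 0%nat) (U 0%nat) = 1.
Proof. apply U_unit; lia. Qed.

Lemma near_u0_0 : near_u0 U 0 = true.
Proof.
  unfold near_u0. rewrite U0_unit, Rabs_R1. destruct Rlt_dec; auto; lra.
Qed.

Lemma inactive_ip_u0 i : (i < n)%nat ->
  Rabs (ip (U i) (U 0%nat)) <= 1/256 \/ 1 - 1/256 <= Rabs (ip (U i) (U 0%nat)).
Proof.
  intros Hi. destruct (Rle_lt_dec (Rabs (ip (U i) (U 0%nat))) (1/256)); [left; auto|].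
  destruct (Rle_lt_dec (1 - 1/256) (Rabs (ip (U i) (U 0%nat)))); [right; auto|].
  exfalso. apply U_inactive. exists i, 0%nat. repeat split; auto; lra.
Qed.

Lemma near_u0_det i : (i < n)%nat -> near_u0 U i = true ->
  Rabs (det (U i) (U 0%nat)) <= 1/8.
Proof.
  unfold near_u0. intros Hi. destruct Rlt_dec; [intros _ | discriminate].
  destruct (inactive_ip_u0 i Hi); [lra|].
  pose proof (ip_sq_add_det_sq _ _ (U_unit i Hi) U0_unit).
  assert ((ip (U i) (U 0%nat))^2 >= (1 - 1/256)^2) by (split_Rabs; nra).
  apply Rabs_le_of_sq_le; lra.
Qed.

Lemma far_u0_ip i : (i < n)%nat -> near_u0 U i = false ->
  Rabs (ip (U i) (U 0%nat)) <= 1/256.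
Proof.
  unfold near_u0. intros Hi. destruct Rlt_dec; [discriminate | intros _].
  destruct (inactive_ip_u0 i Hi); lra.
Qed.

Lemma same_class_det i j : (i < n)%nat -> (j < n)%nat -> near_u0 U i = near_u0 U j ->
  Rabs (det (U i) (U j)) <= 1/4.
Proof.
  intros Hi Hj Hij. destruct (near_u0 U j) eqn:Hj'.
  - pose proof (det_le_det_add_det _ _ _ U0_unit (U_unit i Hi) (U_unit j Hj)).
    pose proof (near_u0_det i Hi Hij). pose proof (near_u0_det j Hj Hj'). lra.
  - pose proof (det_le_ip_add_ip _ _ _ U0_unit (U_unit i Hi) (U_unit j Hj)).
    pose proof (far_u0_ip i Hi Hij). pose proof (far_u0_ip j Hj Hj'). lra.
Qed.

Lemma strictly_convex_all_near : (forall i, (i < n)%nat -> near_u0 U i = true) ->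
  strictly_convex n U.
Proof.
  intros Hnear. apply (strictly_convex_of_axes n U (fun _ => U 0%nat) 1); [lra | |].
  - intros; rewrite U0_unit; lra.
  - intros i Hi. pose proof (near_u0_det i Hi (Hnear i Hi)).
    repeat split; auto using U0_unit; lra.
Qed.

Lemma exists_max_cross_pair : (exists j, (j < n)%nat /\ near_u0 U j = false) ->
  exists p q, (p < n)%nat /\ (q < n)%nat /\ near_u0 U p = true /\ near_u0 U q = false /\
    forall i j, (i < n)%nat -> (j < n)%nat -> near_u0 U i = true -> near_u0 U j = false ->
      Rabs (ip (U i) (U j)) <= Rabs (ip (U p) (U q)).
Proof.
  intros [j0 [Hj0 Hfar0]].
  set (L := filter (fun pr => andb (near_u0 U (fst pr)) (negb (near_u0 U (snd pr))))
                   (list_prod (seq 0 n) (seq 0 n))).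
  assert (HL : forall i j, In (i, j) L <->
    (i < n)%nat /\ (j < n)%nat /\ near_u0 U i = true /\ near_u0 U j = false).
  { intros i j. unfold L. rewrite filter_In, in_prod_iff, !in_seq. simpl.
    destruct (near_u0 U i), (near_u0 U j); simpl; intuition (try lia; try discriminate). }
  assert (Hne : L <> nil).
  { intro E. assert (H0 : In (0%nat, j0) L) by (apply HL; auto using near_u0_0).
    rewrite E in H0; destruct H0. }
  destruct (exists_argmax_in_list (fun pr => Rabs (ip (U (fst pr)) (U (snd pr)))) L Hne)
    as [[p q] [Hin Hmax]].
  apply HL in Hin. destruct Hin as [Hp [Hq [Hpn Hqf]]].
  exists p, q. repeat split; auto.
  intros i j Hi Hj Hin Hjf. apply (Hmax (i, j)), HL; auto.
Qed.

Section CrossPair.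
Variables p q : nat.
Hypothesis p_lt : (p < n)%nat.
Hypothesis q_lt : (q < n)%nat.
Hypothesis p_near : near_u0 U p = true.
Hypothesis q_far : near_u0 U q = false.
Hypothesis pq_max : forall i j, (i < n)%nat -> (j < n)%nat ->
  near_u0 U i = true -> near_u0 U j = false ->
  Rabs (ip (U i) (U j)) <= Rabs (ip (U p) (U q)).
Hypothesis U_active : active n U.

Let M := Rabs (ip (U p) (U q)).

Lemma M_le1 : M <= 1.
Proof. apply ip_abs_le1; apply U_unit; auto. Qed.

(* An active pair inside one class has a nonzero angle, which is bounded by [2 M]. *)
Lemma M_pos : 0 < M.
Proof.
  destruct U_active as [i [j [Hi [Hj [H1 H2]]]]].
  destruct (near_u0 U i) eqn:Ei; destruct (near_u0 U j) eqn:Ej.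
  - pose proof (det_neq0_of_ip_abs_lt1 _ _ (U_unit i Hi) (U_unit j Hj) ltac:(lra)).
    pose proof (det_le_ip_add_ip _ _ _ (U_unit q q_lt) (U_unit i Hi) (U_unit j Hj)).
    pose proof (pq_max i q Hi q_lt Ei q_far). pose proof (pq_max j q Hj q_lt Ej q_far).
    unfold M; lra.
  - pose proof (pq_max i j Hi Hj Ei Ej). unfold M; lra.
  - pose proof (pq_max j i Hj Hi Ej Ei) as Hji. rewrite ip_sym in Hji. unfold M; lra.
  - pose proof (det_neq0_of_ip_abs_lt1 _ _ (U_unit i Hi) (U_unit j Hj) ltac:(lra)).
    pose proof (det_le_ip_add_ip _ _ _ (U_unit p p_lt) (U_unit i Hi) (U_unit j Hj)).
    pose proof (pq_max p i p_lt Hi p_near Ei) as Hpi.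
    pose proof (pq_max p j p_lt Hj p_near Ej) as Hpj.
    rewrite (ip_sym (U p)) in Hpi, Hpj. unfold M; lra.
Qed.

Definition anchor (i : nat) : nat := if near_u0 U i then p else q.

Lemma anchor_lt i : (anchor i < n)%nat.
Proof. unfold anchor; destruct (near_u0 U i); auto. Qed.

Lemma near_u0_anchor i : near_u0 U (anchor i) = near_u0 U i.
Proof. unfold anchor; destruct (near_u0 U i) eqn:E; auto. Qed.

Lemma det_anchor_le i : (i < n)%nat -> Rabs (det (U i) (U (anchor i))) <= 2 * M.
Proof.
  intros Hi. pose proof M_pos. unfold anchor. destruct (near_u0 U i) eqn:E.
  - pose proof (det_le_ip_add_ip _ _ _ (U_unit q q_lt) (U_unit i Hi) (U_unit p p_lt)).
    pose proof (pq_max i q Hi q_lt E q_far). unfold M in *; lra.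
  - pose proof (det_le_ip_add_ip _ _ _ (U_unit p p_lt) (U_unit i Hi) (U_unit q q_lt)).
    pose proof (pq_max p i p_lt Hi p_near E).
    rewrite (ip_sym (U p) (U i)) in H1. rewrite (ip_sym (U q) (U p)) in H0. unfold M in *; lra.
Qed.

Lemma ip_anchor_ge i : (i < n)%nat -> 1/2 <= Rabs (ip (U i) (U (anchor i))).
Proof.
  intros Hi. apply ip_abs_ge_of_det_small; auto using anchor_lt.
  apply same_class_det; auto using anchor_lt. symmetry; apply near_u0_anchor.
Qed.

Definition movers : list nat :=
  filter (fun i => andb (negb (Nat.eqb i p)) (negb (Nat.eqb i q))) (seq 0 n).

Lemma in_movers i : In i movers <-> (i < n)%nat /\ i <> p /\ i <> q.
Proof.
  unfold movers. rewrite filter_In, in_seq.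
  destruct (Nat.eqb_spec i p), (Nat.eqb_spec i q); simpl; intuition lia.
Qed.

Lemma anchor_not_mover i : ~ In (anchor i) movers.
Proof. rewrite in_movers. unfold anchor; destruct (near_u0 U i); tauto. Qed.

Lemma NoDup_movers : NoDup movers.
Proof. apply NoDup_filter, seq_NoDup. Qed.

Variables (f : R -> R) (m : R) (k : nat).
Hypothesis m_pos : 0 < m.
Hypothesis f_push : forall A, 1/2 <= Rabs A <= 1 -> m <= A * f A.
Hypothesis k_large : 256 <= (1 + m)^k.

Lemma valid_pull_movers : valid_seq f n U (pull_all k anchor movers).
Proof.
  apply (valid_pull_all f m m_pos f_push); [apply NoDup_movers|].
  intros i Hi. apply in_movers in Hi as Hi'. destruct Hi' as [Hin _].
  repeat split; auto using anchor_not_mover, anchor_lt, ip_anchor_ge.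
Qed.

Let V := apply_seq f U (pull_all k anchor movers).

Lemma pulled_near_anchor i : (i < n)%nat ->
  ip (V i) (V i) = 1 /\ Rabs (det (V i) (U (anchor i))) <= M / 8.
Proof.
  intros Hi. pose proof M_pos. unfold V.
  rewrite apply_pull_all by auto using NoDup_movers, anchor_not_mover.
  destruct (in_dec Nat.eq_dec i movers) as [Hmov | Hfix].
  - destruct (pull_iter f m m_pos f_push _ (U i) k (U_unit _ (anchor_lt i)) (U_unit i Hi)
       (ip_anchor_ge i Hi)) as [Hunit [_ Hshrink]].
    split; auto.
    pose proof (det_anchor_le i Hi).
    assert ((det (U i) (U (anchor i)))^2 <= (2 * M)^2) by (split_Rabs; nra).
    pose proof (pow2_ge_0 (det (Nat.iter k (pull f (U (anchor i))) (U i)) (U (anchor i)))).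
    apply Rabs_le_of_sq_le; nra.
  - split; [apply U_unit; auto|].
    assert (anchor i = i).
    { unfold anchor. rewrite in_movers in Hfix.
      destruct (Nat.eq_dec i p); [subst; rewrite p_near; auto|].
      destruct (Nat.eq_dec i q); [subst; rewrite q_far; auto | tauto]. }
    rewrite H0, det_self, Rabs_R0. lra.
Qed.

(* The axes are [U p] and [U q] with the sign of [U q] chosen so that their inner product is
   exactly [M]. *)
Lemma pulled_strictly_convex : strictly_convex n V.
Proof.
  set (sq := sgn (ip (U p) (U q))).
  set (F i := if near_u0 U i then U p else vscale sq (U q)).
  pose proof M_pos. pose proof M_le1.
  assert (Hsq : sq * sq = 1) by apply sgn_sq.
  assert (HFq : ip (vscale sq (U q)) (vscale sq (U q)) = 1).
  { rewrite ip_scale_l, ip_scale_r, (U_unit q q_lt). lra. }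
  assert (HFpq : ip (U p) (vscale sq (U q)) = M) by (rewrite ip_scale_r; apply sgn_mul_self).
  apply (strictly_convex_of_axes n V F M); auto.
  - intros i j _ _. unfold F.
    destruct (near_u0 U i), (near_u0 U j);
      rewrite ?(U_unit p p_lt), ?HFq, ?HFpq, ?(ip_sym (vscale sq (U q)) (U p)), ?HFpq; lra.
  - intros i Hi. destruct (pulled_near_anchor i Hi) as [HV Hd].
    unfold F. unfold anchor in Hd. destruct (near_u0 U i).
    + repeat split; auto.
    + rewrite det_scale_r; unfold sq; rewrite Rabs_sgn_mul.
      repeat split; auto.
Qed.

End CrossPair.

Lemma convexifying_sequence f m k : 0 < m ->
  (forall A, 1/2 <= Rabs A <= 1 -> m <= A * f A) -> 256 <= (1 + m)^k ->
  active n U -> (exists j, (j < n)%nat /\ near_u0 U j = false) ->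
  exists s, (length s <= n * k)%nat /\ valid_seq f n U s /\
    strictly_convex n (apply_seq f U s).
Proof.
  intros Hm Hpush Hk Hact Hfar.
  destruct (exists_max_cross_pair Hfar) as [p [q [Hp [Hq [Hpn [Hqf Hmax]]]]]].
  exists (pull_all k (anchor p q) (movers p q)). repeat split.
  - rewrite length_pull_all. apply Nat.mul_le_mono_r.
    unfold movers. rewrite <- (length_seq n 0) at 2. apply filter_length_le.
  - apply (valid_pull_movers p q) with (m := m); auto.
  - apply (pulled_strictly_convex p q) with (m := m); auto.
Qed.

End Configuration.

Theorem mainTheorem8 :
  forall (n : nat), (2 <= n)%nat ->
  forall (f : R -> R), stable f ->
  exists K : nat, (0 < K)%nat /\
    forall U : config, is_config n U ->
      eps_inactive n (1/256) U -> active n U ->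
      exists s : list (nat * nat),
        (length s <= K)%nat /\ valid_seq f n U s /\
        strictly_convex n (apply_seq f U s).
Proof.
  intros n Hn f Hf.
  destruct (stable_push_lower_bound f (1/2) Hf ltac:(lra)) as [m [Hm Hpush]].
  destruct (Pow_x_infinity (1 + m) ltac:(rewrite Rabs_pos_eq; lra) 256) as [k Hk].
  specialize (Hk k (Nat.le_refl k)).
  rewrite Rabs_pos_eq in Hk by (apply pow_le; lra).
  exists (S (n * k)). split; [lia|].
  intros U HU Hinact Hact.
  destruct (forall_or_exists_false (near_u0 U) n) as [Hnear | Hfar].
  - exists nil. repeat split; simpl; [lia|].
    apply strictly_convex_all_near; auto; lia.
  - destruct (convexifying_sequence n U ltac:(lia) HU Hinact f m k Hm Hpush ltac:(lra) Hact Hfar)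
      as [s [Hlen Hs]].
    exists s; split; [lia | exact Hs].
Qed.
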